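(* Let $(X,\mathcal{O}(X))$ be a measurable space, $\mathcal{A}$ a unital $C^*$-algebra and $\mathcal{H}$ a Hilbert space. Let $\pi:\mathcal{A}\to\mathcal{B}(\mathcal{H})$ be a unital $*$-homomorphism and $E:\mathcal{O}(X)\to\mathcal{B}(\mathcal{H})$ a spectral measure with $E(A)\pi(a)=\pi(a)E(A)$ for all $A,a$, and let $\pi E$ be the spectral instrument $\pi E(A,a)=\pi(a)E(A)$. Then the following are equivalent: (i) $\pi E$ is irreducible; (ii) $\pi$ is an irreducible representation of $\mathcal{A}$. Furthermore, in this case $E(\mathcal{O}(X))\subseteq\{0,I_\mathcal{H}\}$.
   Context: The spectral instrument $\pi E$ is called irreducible if it has no proper invariant subspace, equivalently $\{\pi(a)E(A):a\in\mathcal{A},A\in\mathcal{O}(X)\}'=\mathbb{C}I_\mathcal{H}$. A spectral measure is a projection-valued measure. *)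

From HB Require Import structures.
From mathcomp Require Import all_boot all_order all_algebra.
From mathcomp Require Import all_classical all_reals all_analysis.
From mathcomp Require Import complex.
Set Implicit Arguments. Unset Strict Implicit. Unset Printing Implicit Defensive.
Import Order.TTheory GRing.Theory Num.Theory.
Import numFieldNormedType.Exports.
Local Open Scope classical_set_scope.
Local Open Scope ring_scope.
Local Open Scope complex_scope.

Section Defs.
Variable R : realType.
Local Notation C := (R[i]).

Record inner_product (H : normedModType C) (ip : H -> H -> C) : Prop := {
  ip_linear_l : forall (y : H) (k : C) (x1 x2 : H),
      ip (k *: x1 + x2) y = k * ip x1 y + ip x2 y;
  ip_conj_sym : forall x y : H, ip y x = (ip x y)^*;
  ip_norm : forall x : H, ip x x = `|x| ^+ 2 }.

Definition hilbert_space (H : completeNormedModType C) (ip : H -> H -> C) :=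
  inner_product ip.

Definition bounded_op (H : normedModType C) (T : H -> H) : Prop :=
  (forall (k : C) (x y : H), T (k *: x + y) = k *: T x + T y) /\ continuous T.

Definition is_adjoint (H : normedModType C) (ip : H -> H -> C) (T S : H -> H) :=
  forall x y : H, ip (T x) y = ip x (S y).

Record unital_cstar_algebra (A : completeNormedModType C)
    (mul : A -> A -> A) (one : A) (star : A -> A) : Prop := {
  cs_mulA : forall a b c, mul a (mul b c) = mul (mul a b) c;
  cs_mul1l : forall a, mul one a = a;
  cs_mul1r : forall a, mul a one = a;
  cs_mull_linear : forall (k : C) a b c, mul (k *: a + b) c = k *: mul a c + mul b c;
  cs_mulr_linear : forall (k : C) a b c, mul a (k *: b + c) = k *: mul a b + mul a c;
  cs_norm_submul : forall a b, `|mul a b| <= `|a| * `|b|;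
  cs_starK : forall a, star (star a) = a;
  cs_star_antilinear : forall (k : C) a b, star (k *: a + b) = (k^*) *: star a + star b;
  cs_star_mul : forall a b, star (mul a b) = mul (star b) (star a);
  cs_cstar : forall a, `|mul (star a) a| = `|a| ^+ 2 }.

Record unital_star_hom (A : completeNormedModType C) (mul : A -> A -> A)
    (one : A) (star : A -> A) (H : completeNormedModType C)
    (ip : H -> H -> C) (pi : A -> (H -> H)) : Prop := {
  sh_bounded : forall a, bounded_op (pi a);
  sh_linear : forall (k : C) a b, pi (k *: a + b) = (fun x => k *: pi a x + pi b x);
  sh_mul : forall a b, pi (mul a b) = pi a \o pi b;
  sh_one : pi one = id;
  sh_star : forall a, is_adjoint ip (pi a) (pi (star a)) }.

(** Spectral (projection-valued) measure on a measurable space X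
    (only its values on measurable sets matter); countable additivity in
    the strong operator topology. *)
Record spectral_measure d (X : measurableType d) (H : completeNormedModType C)
    (ip : H -> H -> C) (E : set X -> (H -> H)) : Prop := {
  sm_bounded : forall A, measurable A -> bounded_op (E A);
  sm_idem : forall A, measurable A -> E A \o E A = E A;
  sm_selfadjoint : forall A, measurable A -> is_adjoint ip (E A) (E A);
  sm_total : E setT = id;
  sm_sigma_additive : forall F : nat -> set X,
      (forall n, measurable (F n)) -> trivIset setT F ->
      forall x : H,
        (fun n => \sum_(k < n) E (F k) x) @ \oo --> E (\bigcup_n F n) x }.

Definition invariant_subspace (H : normedModType C) (S : set (H -> H)) (V : set H) :=
  [/\ V 0, (forall (k : C) x y, V x -> V y -> V (k *: x + y)), closed V
    & forall T, S T -> forall x, V x -> V (T x)].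

Definition irreducible_family (H : normedModType C) (S : set (H -> H)) :=
  forall V : set H, invariant_subspace S V -> V = [set 0] \/ V = setT.

Definition spectral_instrument d (X : measurableType d) (A : Type)
    (H : normedModType C) (pi : A -> (H -> H)) (E : set X -> (H -> H))
    (B : set X) (a : A) : H -> H := pi a \o E B.

Definition instrument_irreducible d (X : measurableType d) (A : Type)
    (H : normedModType C) (pi : A -> (H -> H)) (E : set X -> (H -> H)) :=
  irreducible_family
    [set T | exists B a, measurable B /\ T = spectral_instrument pi E B a].

Definition irreducible_rep (A : Type) (H : normedModType C) (pi : A -> (H -> H)) :=
  irreducible_family (range pi).

End Defs.

From HB Require Import structures.
From mathcomp Require Import all_boot all_order all_algebra.
From mathcomp Require Import all_classical all_reals all_analysis.
From mathcomp Require Import complex.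
Set Implicit Arguments. Unset Strict Implicit. Unset Printing Implicit Defensive.
Import Order.TTheory GRing.Theory Num.Theory.
Import numFieldNormedType.Exports.
Local Open Scope classical_set_scope.
Local Open Scope ring_scope.
Local Open Scope complex_scope.

(* If B and C are disjoint, E(B), E(C) and E(B) + E(C) = E(B ∪ C) are
   idempotent, which forces E(B) E(C) = 0; splitting B and C along B ∩ C
   then gives E(B) E(C) = E(B ∩ C), so the spectral projections commute.
   Since they also commute with pi, the fixed space of E(B) is a closed
   subspace invariant under every pi(a) E(C); irreducibility of the
   instrument thus makes each E(B) zero or the identity, after which each
   pi(a) E(B) is either pi(a) or 0, so pi-invariant subspaces are
   instrument-invariant. Conversely pi(a) = pi(a) E(X) belongs to the
   instrument. *)

Lemma addmorph0 (V : zmodType) (f : V -> V) : {morph f : x y / x + y} -> f 0 = 0.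
Proof. by move=> fD; apply: (@addrI _ (f 0)); rewrite -fD !addr0. Qed.

Section Idempotents.
Variables (K : numFieldType) (V : lmodType K).

Lemma idempotent_sum_orthogonal (P Q : V -> V) :
  {morph P : x y / x + y} -> {morph Q : x y / x + y} ->
  idempotent_fun P -> idempotent_fun Q -> idempotent_fun (fun x => P x + Q x) ->
  forall x, P (Q x) = 0.
Proof.
(* (P + Q)^2 = P + Q gives PQ = -QP; multiplying by P on either side
   gives PQ = -PQP = QP, hence 2 PQ = 0. *)
move=> PD QD PP QQ PQPQ.
have {}PP y : P (P y) = P y := PP y.
have {}QQ y : Q (Q y) = Q y := QQ y.
have anticomm y : P (Q y) + Q (P y) = 0.
  apply: (@addrI _ (P y + Q y)); rewrite addr0 -[in RHS]PQPQ /= !PD !QD PP QQ.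
  by rewrite addrACA [Q y + _]addrC addrACA.
have PQP y : P (Q y) = Q (P y).
  have left : P (Q y) + P (Q (P y)) = 0.
    by rewrite -[P (Q y)]PP -PD anticomm (addmorph0 PD).
  have right : P (Q (P y)) + Q (P y) = 0 by rewrite -{2}(PP y) anticomm.
  by apply: (@addIr _ (P (Q (P y)))); rewrite left addrC right.
move=> x; have : 2%:R *: P (Q x) = 0 by rewrite scaler_nat mulr2n {2}PQP anticomm.
by move/eqP; rewrite scaler_eq0 pnatr_eq0 => /eqP.
Qed.

End Idempotents.

Section BoundedOperators.
Variables (R : realType) (H : normedModType R[i]).
Implicit Types (T : H -> H) (S : set (H -> H)).

Lemma bounded_opD T : bounded_op T -> {morph T : x y / x + y}.
Proof. by move=> [T_lin _] x y; have := T_lin 1 x y; rewrite !scale1r. Qed.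

Lemma bounded_op0 T : bounded_op T -> T 0 = 0.
Proof. by move/bounded_opD/addmorph0. Qed.

Lemma closed_fixed_points T : continuous T -> closed [set x | T x = x].
Proof.
move=> T_cont; have -> : [set x | T x = x] = (fun x => T x - x) @^-1` [set 0].
  apply/seteqP; split => x /=; first by move->; rewrite subrr.
  by move/eqP; rewrite subr_eq0 => /eqP.
apply: preimage_closed.
  by move=> x _; apply: continuousB; [exact: T_cont | exact: cvg_id].
exact: (accessible_closed_set1 (hausdorff_accessible (@norm_hausdorff _ _))).
Qed.

Lemma invariant_fixed_points S T : bounded_op T ->
  (forall U, S U -> forall x, T (U x) = U (T x)) ->
  invariant_subspace S [set x | T x = x].
Proof.
move=> T_bop TU; split => /=.
- exact: bounded_op0.
- by move=> k x y Tx Ty; rewrite T_bop.1 Tx Ty.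
- exact: closed_fixed_points T_bop.2.
- by move=> U SU x Tx; rewrite TU // Tx.
Qed.

Lemma irreducible_idempotent S T : irreducible_family S -> bounded_op T ->
  T \o T = T -> (forall U, S U -> forall x, T (U x) = U (T x)) ->
  T = (fun=> 0) \/ T = id.
Proof.
move=> S_irr T_bop TT TU.
have [fix0|fixT] := S_irr _ (invariant_fixed_points T_bop TU); [left|right].
  apply/funext => x; have : [set y | T y = y] (T x) by exact: (congr1 (@^~ x) TT).
  by rewrite fix0 => ->.
by apply/funext => x; have : [set x | T x = x] x by rewrite fixT.
Qed.

Lemma irreducible_family_sub S S' :
  (forall T, S T -> S' T \/ T = (fun=> 0)) ->
  irreducible_family S -> irreducible_family S'.
Proof.
move=> SS' S_irr V [V0 Vlin Vcl V'inv]; apply: S_irr; split => // T /SS'[S'T|->] //.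
exact: V'inv.
Qed.

End BoundedOperators.

Section SpectralMeasure.
Variables (R : realType) (d : measure_display) (X : measurableType d).
Variables (H : completeNormedModType R[i]) (ip : H -> H -> R[i]).
Variable E : set X -> H -> H.
Hypothesis E_spectral : spectral_measure ip E.
Implicit Types B C : set X.

Let E_morphD B : measurable B -> {morph E B : x y / x + y}.
Proof. by move=> mB; exact/bounded_opD/(sm_bounded E_spectral). Qed.

Let E_idem B : measurable B -> idempotent_fun (E B).
Proof. by move=> mB y; rewrite (sm_idem E_spectral mB). Qed.

Lemma spectral_measure0 x : E set0 x = 0.
Proof.
set v := E set0 x.
have := sm_sigma_additive E_spectral (fun=> measurable0)
  (@trivIset_set0 _ X setT) (x := x).
rewrite bigcup0 // -/v (_ : (fun n => _) = fun n => v *+ n); last first.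
  by apply/funext => n; rewrite sumr_const card_ord.
move=> v_cvg; apply: (@addrI _ v); rewrite addr0.
have vS_cvg : (fun n => v + v *+ n) @ \oo --> v.
  rewrite (_ : (fun n => _) = fun n => v *+ n.+1) ?cvg_shiftS //.
  by apply/funext => n; rewrite mulrS.
exact: (cvg_unique (@norm_hausdorff _ _) (cvgD (cvg_cst v) v_cvg) vS_cvg).
Qed.

Lemma spectral_measureU B C : measurable B -> measurable C -> B `&` C = set0 ->
  forall x, E (B `|` C) x = E B x + E C x.
Proof.
move=> mB mC BC0 x.
have mBC n : measurable (bigcup2 B C n) by rewrite /bigcup2; do 2?case: ifP.
have BC_triv : trivIset setT (bigcup2 B C) by rewrite -trivIset_bigcup2.
have := sm_sigma_additive E_spectral mBC BC_triv (x := x).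
rewrite bigcup2E -(cvg_shiftn 2) (_ : (fun n => _) = fun=> E B x + E C x).
  by move/(cvg_unique (@norm_hausdorff _ _) (cvg_cst _)).
apply/funext => n; rewrite addn2 2!big_ord_recl big1 ?addr0 //.
by move=> k _; exact: spectral_measure0.
Qed.

Lemma spectral_measure_disjoint B C : measurable B -> measurable C ->
  B `&` C = set0 -> forall x, E B (E C x) = 0.
Proof.
move=> mB mC BC0.
apply: (idempotent_sum_orthogonal (E_morphD mB) (E_morphD mC) (E_idem mB) (E_idem mC)).
rewrite (_ : (fun x => _) = E (B `|` C)); first exact/E_idem/measurableU.
by apply/funext => x; rewrite spectral_measureU.
Qed.

Lemma spectral_measureI B C : measurable B -> measurable C ->
  forall x, E B (E C x) = E (B `&` C) x.
Proof.
move=> mB mC x.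
have mBC := measurableI _ _ mB mC.
have IDI0 A1 A2 A3 : (A1 `&` A2) `&` (A3 `\` A2) = set0.
  by rewrite -setIA setDIK setI0.
have splitC : E C x = E (B `&` C) x + E (C `\` B) x.
  rewrite [B `&` C]setIC -spectral_measureU ?setUIDK ?IDI0 //.
    by rewrite setIC.
  exact: measurableD.
have splitB y : E B y = E (B `&` C) y + E (B `\` C) y.
  by rewrite -spectral_measureU ?setUIDK ?IDI0 //; exact: measurableD.
rewrite splitC E_morphD // splitB.
rewrite (spectral_measure_disjoint mB (measurableD mC mB)) ?setDIK // addr0.
rewrite (spectral_measure_disjoint (measurableD mB mC) mBC) ?addr0; last first.
  by rewrite setIC IDI0.
exact: E_idem.
Qed.

Lemma spectral_measure_comm B C : measurable B -> measurable C ->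
  forall x, E B (E C x) = E C (E B x).
Proof. by move=> mB mC x; rewrite !spectral_measureI // setIC. Qed.

End SpectralMeasure.

Theorem proposition2p14 (R : realType) (d : measure_display) (X : measurableType d)
    (A : completeNormedModType R[i]) (mul : A -> A -> A) (one : A) (star : A -> A)
    (H : completeNormedModType R[i]) (ip : H -> H -> R[i])
    (pi : A -> (H -> H)) (E : set X -> (H -> H)) :
  unital_cstar_algebra mul one star ->
  hilbert_space ip ->
  unital_star_hom mul one star ip pi ->
  spectral_measure ip E ->
  (forall (B : set X) (a : A), measurable B -> E B \o pi a = pi a \o E B) ->
  (instrument_irreducible pi E <-> irreducible_rep pi) /\
  (instrument_irreducible pi E ->
     forall B : set X, measurable B -> E B = (fun _ => 0) \/ E B = id).
Proof.
move=> _ _ pi_hom E_spectral E_pi_comm.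
have E_trivial : instrument_irreducible pi E ->
    forall B, measurable B -> E B = (fun=> 0) \/ E B = id.
  move=> piE_irr B mB.
  apply: (irreducible_idempotent piE_irr (sm_bounded E_spectral mB)
    (sm_idem E_spectral mB)).
  move=> _ [B' [a [mB' ->]]] x /=.
  have /= -> := congr1 (@^~ (E B' x)) (E_pi_comm B a mB).
  by rewrite (spectral_measure_comm E_spectral).
split; last exact: E_trivial.
split=> irr; apply: (irreducible_family_sub _ irr).
- move=> _ [B [a [mB ->]]]; rewrite /spectral_instrument.
  case: (E_trivial irr B mB) => ->; last by left; exists a.
  by right; apply/funext => x; exact: bounded_op0 (sh_bounded pi_hom a).
- move=> _ [a _ <-]; left; exists setT, a; split => //.
  by rewrite /spectral_instrument (sm_total E_spectral).
Qed.
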